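(* Let $H\in\mathbb{R}^{n\times d}$, $\Sigma\in\mathbb{R}^{n\times n}$ symmetric positive definite, $y\in\mathbb{R}^n$, $J\ge2$, and let $v_i^{(j)}$ be generated by deterministic EKI $$v_{i+1}^{(j)}=v_i^{(j)}+\Gamma_iH^\top(H\Gamma_iH^\top+\Sigma)^{-1}(y-Hv_i^{(j)}),$$ with $\Gamma_i$ the empirical covariance of $v_i^{(1)},\dots,v_i^{(J)}$. If $w\in\mathbb{R}^n\setminus\{0\}$ and $\delta_i\in\mathbb{R}$ satisfy $H\Gamma_iH^\top w=\delta_i\Sigma w$, then $H\Gamma_{i+1}H^\top w=\delta_{i+1}\Sigma w$ with $\delta_{i+1}=\delta_i/(1+\delta_i)^2$. In particular the generalized eigenvectors of the pencil $(H\Gamma_iH^\top,\Sigma)$ are constant in $i$.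
   Context: Empirical covariance: $\Gamma_i=\frac1{J-1}\sum_{j=1}^J(v_i^{(j)}-\bar v_i)(v_i^{(j)}-\bar v_i)^\top$, $\bar v_i=\frac1J\sum_jv_i^{(j)}$. *)

From HB Require Import structures.
From mathcomp Require Import all_boot all_order all_algebra.
Set Implicit Arguments. Unset Strict Implicit. Unset Printing Implicit Defensive.
Import Order.TTheory GRing.Theory Num.Theory.
Local Open Scope ring_scope.

Definition ens_mean (R : realFieldType) (d J : nat) (v : 'I_J -> 'cV[R]_d)
  : 'cV[R]_d := (J%:R)^-1 *: \sum_(j < J) v j.

Definition emp_cov (R : realFieldType) (d J : nat) (v : 'I_J -> 'cV[R]_d)
  : 'M[R]_d :=
  ((J - 1)%:R)^-1 *:
    \sum_(j < J) ((v j - ens_mean v) *m (v j - ens_mean v)^T).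

Definition eki_step (R : realFieldType) (n d J : nat) (H : 'M[R]_(n, d))
  (Sigma : 'M[R]_n) (y : 'cV[R]_n) (v : 'I_J -> 'cV[R]_d) : 'I_J -> 'cV[R]_d :=
  fun j => v j + emp_cov v *m H^T *m invmx (H *m emp_cov v *m H^T + Sigma)
                   *m (y - H *m v j).

Definition sym_posdef (R : realFieldType) (n : nat) (S : 'M[R]_n) : Prop :=
  S^T = S /\ forall x : 'cV[R]_n, x != 0 -> 0 < (x^T *m S *m x) 0 0.

(** An EKI step moves every particle by the same affine map
    [v |-> (1 - K H) v + K y], [K = Gamma H^T M], [M = (C + Sigma)^-1],
    [C = H Gamma H^T], so the covariance becomes [(1 - K H) Gamma (1 - K H)^T].
    Since [H (1 - K H) = (1 - C M) H = Sigma M H], the observed covariance is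
    [H Gamma' H^T = Sigma M C M Sigma].  If [C w = delta Sigma w] then
    [(C + Sigma) w = (1 + delta) Sigma w], i.e. [M Sigma w = w / (1 + delta)]
    ([1 + delta <> 0] because [C + Sigma], positive semidefinite plus positive
    definite, is invertible), and applying [Sigma M C M Sigma] to [w] yields
    [delta / (1 + delta)^2 * Sigma w]. *)

From HB Require Import structures.
From mathcomp Require Import all_boot all_order all_algebra ring.
Set Implicit Arguments. Unset Strict Implicit. Unset Printing Implicit Defensive.
Import Order.TTheory GRing.Theory Num.Theory.
Local Open Scope ring_scope.

Definition psdmx (R : numDomainType) (n : nat) (A : 'M[R]_n) : Prop :=
  forall x : 'cV[R]_n, 0 <= (x^T *m A *m x) 0 0.

Definition kalman_gain (R : comUnitRingType) (n d : nat)
  (H : 'M[R]_(n, d)) (G : 'M[R]_d) (S : 'M[R]_n) : 'M[R]_(d, n) :=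
  G *m H^T *m invmx (H *m G *m H^T + S).

Section EmpiricalCovariance.
Variables (R : realFieldType) (d J : nat).
Implicit Types (v u : 'I_J -> 'cV[R]_d).

Section AffineImage.
Hypothesis J_gt0 : (0 < J)%N.
Variables (A : 'M[R]_d) (b : 'cV[R]_d).

Lemma ens_mean_affine v u :
  (forall j, u j = A *m v j + b) -> ens_mean u = A *m ens_mean v + b.
Proof.
move=> def_u; rewrite /ens_mean.
under eq_bigr => j _ do rewrite def_u.
rewrite big_split /= -mulmx_sumr sumr_const card_ord scalerDr scalemxAr.
by rewrite -scaler_nat scalerA mulVf ?scale1r // pnatr_eq0 -lt0n.
Qed.

Lemma emp_cov_affine v u :
  (forall j, u j = A *m v j + b) -> emp_cov u = A *m emp_cov v *m A^T.
Proof.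
move=> def_u; rewrite /emp_cov (ens_mean_affine def_u).
rewrite -[in RHS]scalemxAr -[in RHS]scalemxAl mulmx_sumr mulmx_suml.
congr (_ *: _); apply: eq_bigr => j _.
rewrite def_u opprD addrACA subrr addr0 -mulmxBr.
by rewrite trmx_mul !mulmxA.
Qed.

End AffineImage.

Lemma emp_cov_sym v : (emp_cov v)^T = emp_cov v.
Proof.
rewrite /emp_cov linearZ /= linear_sum /=; congr (_ *: _).
by apply: eq_bigr => j _; rewrite trmx_mul trmxK.
Qed.

Lemma emp_cov_psd v : psdmx (emp_cov v).
Proof.
move=> x; rewrite /emp_cov -scalemxAr -scalemxAl mxE.
apply: mulr_ge0; first by rewrite invr_ge0 ler0n.
rewrite mulmx_sumr mulmx_suml summxE; apply: sumr_ge0 => j _.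
set e := v j - ens_mean v.
have -> : x^T *m (e *m e^T) *m x = (x^T *m e) *m (x^T *m e)^T.
  by rewrite trmx_mul trmxK !mulmxA.
by rewrite mxE big_ord1 [X in _ * X]mxE -expr2 sqr_ge0.
Qed.

End EmpiricalCovariance.

Lemma psdmx_conj (R : numDomainType) (n d : nat) (H : 'M[R]_(n, d)) (G : 'M[R]_d) :
  psdmx G -> psdmx (H *m G *m H^T).
Proof.
by move=> G_psd x; have := G_psd (H^T *m x); rewrite trmx_mul trmxK !mulmxA.
Qed.

Lemma unitmx_psd_add_posdef (R : realFieldType) (n : nat) (C S : 'M[R]_n) :
  psdmx C -> sym_posdef S -> C + S \in unitmx.
Proof.
move=> C_psd [_ S_pd]; rewrite unitmxE unitfE; apply/negP => /det0P[r r_neq0].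
have rT_neq0 : r^T != 0 by rewrite -(inj_eq (@trmx_inj _ _ _)) trmxK trmx0.
move/(congr1 (fun A => A *m r^T)); rewrite mul0mx mulmxDr mulmxDl.
move/(congr1 (fun A : 'M[R]_1 => A 0 0)); rewrite mxE [RHS]mxE.
have := C_psd r^T; have := S_pd _ rT_neq0; rewrite trmxK => Spos Cnneg.
by move/eqP; rewrite gt_eqF // ltr_wpDl.
Qed.

Section KalmanGain.
Variables (R : comUnitRingType) (n d : nat).
Variables (H : 'M[R]_(n, d)) (G : 'M[R]_d) (S : 'M[R]_n).

Lemma obs_kalman_update :
  H *m G *m H^T + S \in unitmx ->
  H *m (1%:M - kalman_gain H G S *m H)
    = S *m invmx (H *m G *m H^T + S) *m H.
Proof.
move=> CS_unit; rewrite mulmxBr mulmx1 /kalman_gain !mulmxA.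
set C := H *m G *m H^T; set M := invmx (C + S).
have SM : S *m M = 1%:M - C *m M.
  by rewrite -(mulmxV CS_unit) mulmxDl [_ + S *m M]addrC addrK.
by rewrite SM mulmxBl mul1mx.
Qed.

End KalmanGain.

Lemma pencil_eigen_update (R : fieldType) (n : nat) (C S : 'M[R]_n)
  (w : 'cV[R]_n) (delta : R) :
  C + S \in unitmx -> w != 0 -> C *m w = delta *: (S *m w) ->
  let M := invmx (C + S) in
  S *m M *m C *m M *m S *m w = (delta / (1 + delta) ^+ 2) *: (S *m w).
Proof.
move=> CS_unit w_neq0 eig M.
have CSw : (C + S) *m w = (1 + delta) *: (S *m w).
  by rewrite mulmxDl eig scalerDl scale1r addrC.
have delta1_neq0 : 1 + delta != 0.
  apply: contraNneq w_neq0 => delta1_eq0.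
  by rewrite -(mulKmx CS_unit w) CSw delta1_eq0 scale0r mulmx0.
have MSw : M *m (S *m w) = (1 + delta)^-1 *: w.
  by rewrite -[w in RHS](mulKmx CS_unit) CSw -scalemxAr scalerA mulVf ?scale1r.
rewrite -!mulmxA MSw -!scalemxAr eig -scalemxAr MSw !scalemxAr !scalerA.
suff -> : (1 + delta)^-1 * delta / (1 + delta) = delta / (1 + delta) ^+ 2 by [].
by field.
Qed.

Section EKIStep.
Variables (R : realFieldType) (n d J : nat).
Variables (H : 'M[R]_(n, d)) (S : 'M[R]_n) (y : 'cV[R]_n).

Lemma eki_step_affine (v : 'I_J -> 'cV[R]_d) j :
  let K := kalman_gain H (emp_cov v) S in
  eki_step H S y v j = (1%:M - K *m H) *m v j + K *m y.
Proof.
by rewrite /eki_step mulmxBr mulmxBl mul1mx !mulmxA addrAC addrA.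
Qed.

Lemma emp_cov_eki_step_obs (v : 'I_J -> 'cV[R]_d) :
  (0 < J)%N -> S^T = S ->
  let C := H *m emp_cov v *m H^T in
  C + S \in unitmx ->
  let M := invmx (C + S) in
  H *m emp_cov (eki_step H S y v) *m H^T = S *m M *m C *m M *m S.
Proof.
move=> J_gt0 S_sym C CS_unit M.
rewrite (emp_cov_affine J_gt0 (eki_step_affine v)).
have -> : forall A : 'M[R]_d, H *m (A *m emp_cov v *m A^T) *m H^T
                            = H *m A *m emp_cov v *m (H *m A)^T.
  by move=> A; rewrite trmx_mul !mulmxA.
rewrite obs_kalman_update // !trmx_mul trmx_inv linearD /= S_sym.
by rewrite !trmx_mul trmxK emp_cov_sym !mulmxA.
Qed.

End EKIStep.

Theorem proposition3p1 (R : realFieldType) (n d J : nat)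
  (H : 'M[R]_(n, d)) (Sigma : 'M[R]_n) (y : 'cV[R]_n)
  (v : nat -> 'I_J -> 'cV[R]_d) :
  sym_posdef Sigma ->
  (2 <= J)%N ->
  (forall i, v i.+1 = eki_step H Sigma y (v i)) ->
  forall (i : nat) (w : 'cV[R]_n) (delta : R),
    w != 0 ->
    H *m emp_cov (v i) *m H^T *m w = delta *: (Sigma *m w) ->
    H *m emp_cov (v i.+1) *m H^T *m w
      = (delta / (1 + delta) ^+ 2) *: (Sigma *m w).
Proof.
move=> Sigma_pd J_ge2 def_v i w delta w_neq0 eig.
have [Sigma_sym _] := Sigma_pd.
have CS_unit := unitmx_psd_add_posdef (psdmx_conj H (emp_cov_psd (v i))) Sigma_pd.
rewrite def_v emp_cov_eki_step_obs ?(ltnW J_ge2) //.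
exact: pencil_eigen_update.
Qed.
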